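(* Let $\mathfrak{g}$ be a finite-dimensional complex Lie algebra, let $I$ be an ideal of $\mathfrak{g}$ such that $\mathfrak{g}/I$ is abelian, and let $\mathfrak{z}=Z(I)$ be the center of $I$. Then every $1$-cocycle $f\in Z^1(\mathfrak{g}/I,\mathfrak{z})$ defines an associative nil-inner CPA-structure on $\mathfrak{g}$ by $x\cdot y=[f(\overline{x}),y]$ for all $x,y\in\mathfrak{g}$, where $\overline{x}$ denotes the image of $x$ in $\mathfrak{g}/I$.
   Context: $\mathfrak{z}$ is an ideal of $\mathfrak{g}$ and $\mathfrak{g}/I$ acts on $\mathfrak{z}$ by $\overline{x}\circ z=[x,z]$. $Z^1(\mathfrak{g}/I,\mathfrak{z})$ is the space of linear maps $f:\mathfrak{g}/I\to\mathfrak{z}$ with $f([\overline{x},\overline{y}])=\overline{x}\circ f(\overline{y})-\overline{y}\circ f(\overline{x})$. A CPA-structure on $\mathfrak{g}$ is a bilinear product $x\cdot y$ satisfying, for all $x,y,z$: $x\cdot y=y\cdot x$; $[x,y]\cdot z=x\cdot(y\cdot z)-y\cdot(x\cdot z)$; $x\cdot[y,z]=[x\cdot y,z]+[y,x\cdot z]$. It is nil-inner if $x\cdot y=[\phi(x),y]$ for some nilpotent Lie algebra homomorphism $\phi:\mathfrak{g}\to\mathfrak{g}$; associative means $(x\cdot y)\cdot z=x\cdot(y\cdot z)$. *)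

From HB Require Import structures.
From mathcomp Require Import all_boot all_order all_algebra.
From mathcomp Require Import reals complex.
Set Implicit Arguments. Unset Strict Implicit. Unset Printing Implicit Defensive.
Import GRing.Theory.
Local Open Scope ring_scope.

Section LieDefs.
Variables (K : fieldType) (V : vectType K).

Definition is_lie_bracket (br : V -> V -> V) : Prop :=
  [/\ forall x, linear (br x),
      forall y, linear (fun x => br x y),
      forall x, br x x = 0 &
      forall x y z, br x (br y z) + br y (br z x) + br z (br x y) = 0].

Definition is_lie_ideal (br : V -> V -> V) (I : {vspace V}) : Prop :=
  forall x y, y \in I -> br x y \in I.

Definition quotient_abelian (br : V -> V -> V) (I : {vspace V}) : Prop :=
  forall x y, br x y \in I.

Definition in_center (br : V -> V -> V) (I : {vspace V}) (z : V) : Prop :=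
  z \in I /\ forall i, i \in I -> br z i = 0.

(* Z^1(g/I, Z(I)): a linear map g/I -> Z(I) is represented by its lift
   f : g -> g, i.e. a linear map vanishing on I with values in Z(I);
   f(xbar) := f x.  The action is xbar o z = [x, z]. *)
Definition cocycle1 (br : V -> V -> V) (I : {vspace V}) (f : V -> V) : Prop :=
  [/\ linear f,
      forall x, x \in I -> f x = 0,
      forall x, in_center br I (f x) &
      forall x y, f (br x y) = br x (f y) - br y (f x)].

Definition is_CPA (br : V -> V -> V) (p : V -> V -> V) : Prop :=
  [/\ forall x, linear (p x),
      forall y, linear (fun x => p x y),
      forall x y, p x y = p y x,
      forall x y z, p (br x y) z = p x (p y z) - p y (p x z) &
      forall x y z, p x (br y z) = br (p x y) z + br y (p x z)].

Definition is_lie_hom (br : V -> V -> V) (phi : V -> V) : Prop :=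
  linear phi /\ forall x y, phi (br x y) = br (phi x) (phi y).

Definition nilpotent_map (phi : V -> V) : Prop :=
  exists n : nat, forall x, iter n phi x = 0.

Definition nil_inner (br : V -> V -> V) (p : V -> V -> V) : Prop :=
  exists phi : V -> V, [/\ is_lie_hom br phi, nilpotent_map phi &
                           forall x y, p x y = br (phi x) y].

Definition associative_prod (p : V -> V -> V) : Prop :=
  forall x y z, p (p x y) z = p x (p y z).

End LieDefs.

(** Since g/I is abelian, every bracket lies in I, so f kills all brackets and
    all values of f, while each f x is central in I.  Hence both sides of every
    CPA identity and of associativity collapse to 0, except the derivation rule,
    which is the Jacobi identity for ad (f x); the cocycle condition reduces to
    the commutativity [f x, y] = [f y, x] of the product. *)
From mathcomp Require Import all_boot all_order all_algebra.
From mathcomp Require Import reals complex.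
Set Implicit Arguments. Unset Strict Implicit.
Import GRing.Theory.
Local Open Scope ring_scope.

Section LinearMaps.
Variables (K : fieldType) (V : vectType K) (g : V -> V).
Hypothesis g_linear : linear g.

Lemma linearD_fun x y : g (x + y) = g x + g y.
Proof. by rewrite -[x in LHS]scale1r g_linear scale1r. Qed.

Lemma linear0_fun : g 0 = 0.
Proof. by apply: (addrI (g 0)); rewrite -linearD_fun !addr0. Qed.

Lemma linearN_fun x : g (- x) = - g x.
Proof. by apply: (addrI (g x)); rewrite -linearD_fun !subrr linear0_fun. Qed.

Lemma linear_comp_fun (h : V -> V) : linear h -> linear (fun x => h (g x)).
Proof. by move=> h_linear a u v; rewrite g_linear h_linear. Qed.

End LinearMaps.

Section LieBracket.
Variables (K : fieldType) (V : vectType K) (br : V -> V -> V).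
Hypothesis lie : is_lie_bracket br.

Lemma lie_bracket0l y : br 0 y = 0.
Proof. by case: lie => _ linl _ _; exact: linear0_fun (linl y). Qed.

Lemma lie_bracketC x y : br x y = - br y x.
Proof.
case: lie => linr linl alt _; apply/eqP; rewrite -addr_eq0.
have := alt (x + y).
rewrite linearD_fun // (linearD_fun (linl x)) (linearD_fun (linl y)) !alt.
by rewrite add0r addr0 addrC => ->.
Qed.

Lemma lie_bracket_derivation x y z :
  br x (br y z) = br (br x y) z + br y (br x z).
Proof.
case: lie => linr _ _ jacobi; apply/eqP; rewrite -subr_eq0.
rewrite -(jacobi x y z) (lie_bracketC z (br x y)) (lie_bracketC z x).
by rewrite (linearN_fun (linr y)) opprD addrA addrAC.
Qed.

End LieBracket.

Section AbelianQuotientCocycle.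
Variables (K : fieldType) (V : vectType K) (br : V -> V -> V).
Variables (I : {vspace V}) (f : V -> V).
Hypotheses (lie : is_lie_bracket br) (abelian : quotient_abelian br I).
Hypothesis cocycle : cocycle1 br I f.

Lemma cocycle_bracket0 x y : f (br x y) = 0.
Proof. by case: cocycle => _ fI _ _; exact: fI. Qed.

Lemma cocycle_in_ideal x : f x \in I.
Proof. by case: cocycle => _ _ fZ _; case: (fZ x). Qed.

Lemma cocycle_idem0 x : f (f x) = 0.
Proof. by case: cocycle => _ fI _ _; exact: fI (cocycle_in_ideal x). Qed.

Lemma cocycle_central x i : i \in I -> br (f x) i = 0.
Proof. by case: cocycle => _ _ fZ _; case: (fZ x) => _; exact. Qed.

Lemma cocycle_bracket_commute x y : br (f x) (f y) = 0.
Proof. exact: cocycle_central (cocycle_in_ideal y). Qed.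

Lemma cocycle_kills_brackets x y z : br (f x) (br y z) = 0.
Proof. exact: cocycle_central (abelian y z). Qed.

Lemma cocycle_prodC x y : br (f x) y = br (f y) x.
Proof.
case: cocycle => _ _ _ fc; move/eqP: (fc x y).
rewrite cocycle_bracket0 eq_sym subr_eq0 => /eqP eq_xy.
by rewrite lie_bracketC // -eq_xy lie_bracketC // opprK.
Qed.

Let p x y := br (f x) y.

Lemma cocycle_prod_CPA : is_CPA br p.
Proof.
case: (lie) => linr linl _ _; case: cocycle => flin _ _ _; split.
- by move=> x; exact: linr.
- by move=> y; have := linear_comp_fun flin (linl y).
- exact: cocycle_prodC.
- by move=> x y z; rewrite /p cocycle_bracket0 lie_bracket0l //
    !cocycle_kills_brackets subrr.
- by move=> x y z; rewrite /p lie_bracket_derivation.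
Qed.

Lemma cocycle_prod_nil_inner : nil_inner br p.
Proof.
case: cocycle => flin _ _ _; exists f; split => //.
- by split=> // x y; rewrite cocycle_bracket0 cocycle_bracket_commute.
- by exists 2%N => x; rewrite /= cocycle_idem0.
Qed.

Lemma cocycle_prod_associative : associative_prod p.
Proof.
by move=> x y z; rewrite /p cocycle_bracket0 lie_bracket0l // cocycle_kills_brackets.
Qed.

End AbelianQuotientCocycle.

Theorem proposition4p1 (R : realType) (V : vectType R[i]) (br : V -> V -> V)
    (I : {vspace V}) (f : V -> V) :
  is_lie_bracket br -> is_lie_ideal br I -> quotient_abelian br I ->
  cocycle1 br I f ->
  let p := fun x y => br (f x) y in
  [/\ is_CPA br p, nil_inner br p & associative_prod p].
Proof.
(* [is_lie_ideal br I] is implied by [quotient_abelian br I]. *)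
move=> lie _ abelian cocycle p; split.
- exact: cocycle_prod_CPA.
- exact: cocycle_prod_nil_inner.
- exact: cocycle_prod_associative.
Qed.
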